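(* Let $A=\mathrm{Sym}(\mathrm{Sym}^2(\mathbb{C}^\infty))=\mathbb{C}[x_{i,j}]$ and let $\mathfrak{m}$ be the ideal generated by $x_{i,i}-1$ ($i\ge1$) and $x_{i,j}$ ($i\ne j$). If $I$ is a nonzero $\mathrm{GL}_\infty$-stable ideal of $A$, then $I+\mathfrak{m}=A$.
   Context: $x_{i,j}=e_ie_j$ for the basis $e_1,e_2,\dots$ of $\mathbb{C}^\infty$; $\mathrm{GL}_\infty=\bigcup_n\mathrm{GL}_n$ acts on $A$ via its action on $\mathbb{C}^\infty$. *)

From HB Require Import structures.
From mathcomp Require Import all_boot all_order all_algebra.
Set Implicit Arguments. Unset Strict Implicit. Unset Printing Implicit Defensive.
Import Order.TTheory GRing.Theory Num.Theory.
Local Open Scope ring_scope.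

(* Model of A = Sym(Sym^2(K^oo)) = K[x_{i,j}] (x_{i,j} = x_{j,i}) as the ring of
   polynomial functions on points v : nat -> nat -> K, where the variable
   x_{i,j} is the coordinate function v |-> v (min i j) (max i j).
   Since K is infinite, polynomials in finitely many of the x_{i,j} are
   faithfully represented by their polynomial functions. *)
Definition pt (K : Type) := nat -> nat -> K.
Definition fn (K : Type) := pt K -> K.

Definition xvar (K : Type) (i j : nat) : fn K :=
  fun v => v (minn i j) (maxn i j).

Inductive is_poly (K : numClosedFieldType) : fn K -> Prop :=
| poly_const (c : K) : is_poly (fun _ => c)
| poly_var (i j : nat) : is_poly (xvar i j)
| poly_add (f g : fn K) : is_poly f -> is_poly g -> is_poly (fun v => f v + g v)
| poly_mul (f g : fn K) : is_poly f -> is_poly g -> is_poly (fun v => f v * g v).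

Definition is_ideal (K : numClosedFieldType) (I : fn K -> Prop) : Prop :=
  [/\ (forall f, I f -> is_poly f),
      I (fun _ => 0),
      (forall f g, I f -> I g -> I (fun v => f v + g v)) &
      (forall a f, is_poly a -> I f -> I (fun v => a v * f v))].

Inductive gen_ideal (K : numClosedFieldType) (G : fn K -> Prop) : fn K -> Prop :=
| gen_ideal0 : gen_ideal G (fun _ => 0)
| gen_ideal_gen (a g : fn K) : is_poly a -> G g -> gen_ideal G (fun v => a v * g v)
| gen_ideal_add (f g : fn K) :
    gen_ideal G f -> gen_ideal G g -> gen_ideal G (fun v => f v + g v).

Inductive m_gen (K : numClosedFieldType) : fn K -> Prop :=
| m_gen_diag (i : nat) : m_gen (fun v => xvar i i v - 1)
| m_gen_off (i j : nat) : i <> j -> m_gen (xvar i j).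

Definition m_ideal (K : numClosedFieldType) : fn K -> Prop := gen_ideal (@m_gen K).

(* g in GL_n viewed as an element of GL_oo (identity on e_k, k >= n):
   entry (k, i) is the e_k-coordinate of g e_i. *)
Definition ext (K : numClosedFieldType) (n : nat) (M : 'M[K]_n) (k i : nat) : K :=
  match (insub k : option 'I_n), (insub i : option 'I_n) with
  | Some k', Some i' => M k' i'
  | _, _ => (k == i)%:R
  end.

(* g . x_{i,j} = (g e_i)(g e_j) = sum_{k,l} g_{k,i} g_{l,j} x_{k,l};
   the bound n + i + j + 1 covers all k with g_{k,i} <> 0. *)
Definition act_pt (K : numClosedFieldType) (n : nat) (M : 'M[K]_n) (v : pt K) : pt K :=
  fun i j => \sum_(k < n + i + j + 1) \sum_(l < n + i + j + 1)
               ext M k i * ext M l j * xvar k l v.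

Definition act (K : numClosedFieldType) (n : nat) (M : 'M[K]_n) (f : fn K) : fn K :=
  fun v => f (act_pt M v).

Definition GL_stable (K : numClosedFieldType) (I : fn K -> Prop) : Prop :=
  forall (n : nat) (M : 'M[K]_n), M \in unitmx -> forall f, I f -> I (act M f).

From mathcomp Require Import all_boot all_algebra.
From mathcomp Require Import ring zify.
From Stdlib Require Import FunctionalExtensionality Classical.
Set Implicit Arguments. Unset Strict Implicit. Unset Printing Implicit Defensive.
Import GRing.Theory Num.Theory.
Local Open Scope ring_scope.

(* The point [idpt] (x_{i,i} = 1, x_{i,j} = 0) is the common zero of m, so it
   suffices to find g in I with g(idpt) <> 0: then a - (a(idpt)/g(idpt)) g
   vanishes at idpt, hence lies in m.  Suppose I vanished at idpt.  By
   GL-invariance it vanishes at every g.idpt = g^T g, and since its zero set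
   is closed along polynomial curves (a nonzero polynomial in t has only
   finitely many roots), it vanishes at every finite symmetric matrix: these
   are reached from the identity by symmetric Gaussian elimination
   S = M^T W M, after perturbing each pivot S_kk along t |-> S_kk + t to make
   it invertible.  As every polynomial depends on finitely many variables and
   v |-> (x_{i,j}(v))_{i,j<N} is such a symmetric matrix, I would be zero. *)

Section PolynomialFunctions.
Variable K : numClosedFieldType.

Definition idpt : pt K := fun i j => (i == j)%:R.

Lemma xvar_idpt i j : xvar i j idpt = (i == j)%:R.
Proof. by rewrite /xvar /idpt; case: (leqP i j) => // _; rewrite eq_sym. Qed.

Lemma is_poly_sub (f g : fn K) : is_poly f -> is_poly g -> is_poly (fun v => f v - g v).
Proof.
move=> pf pg; have := poly_add pf (poly_mul (poly_const (-1)) pg).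
by congr is_poly; apply: functional_extensionality => v; rewrite mulN1r.
Qed.

Lemma gen_ideal_mull (G : fn K -> Prop) (b h : fn K) :
  is_poly b -> gen_ideal G h -> gen_ideal G (fun v => b v * h v).
Proof.
move=> pb; elim=> [|a g pa Gg|f g _ IHf _ IHg].
- rewrite (_ : (fun v => _) = fun _ => 0); first exact: gen_ideal0.
  by apply: functional_extensionality => v; rewrite mulr0.
- rewrite (_ : (fun v => _) = fun v => (fun w => b w * a w) v * g v).
    by apply: gen_ideal_gen => //; apply: poly_mul.
  by apply: functional_extensionality => v; rewrite mulrA.
- rewrite (_ : (fun v => _) = fun v => (fun w => b w * f w) v + (fun w => b w * g w) v).
    exact: gen_ideal_add.
  by apply: functional_extensionality => v; rewrite mulrDr.
Qed.

Lemma m_ideal_sub_idpt (h : fn K) : is_poly h -> m_ideal (fun v => h v - h idpt).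
Proof.
elim=> [c|i j|f g pf IHf pg IHg|f g pf IHf pg IHg].
- rewrite (_ : (fun _ => _) = fun _ => 0); first exact: gen_ideal0.
  by apply: functional_extensionality => v; rewrite subrr.
- rewrite xvar_idpt; have [<-|nij] := eqVneq i j.
    rewrite (_ : (fun v => _) = fun v => (fun _ => 1) v * (fun w => xvar i i w - 1) v).
      by apply: gen_ideal_gen; [apply: poly_const | apply: m_gen_diag].
    by apply: functional_extensionality => v; rewrite mul1r.
  rewrite (_ : (fun v => _) = fun v => (fun _ => 1) v * xvar i j v).
    by apply: gen_ideal_gen; [apply: poly_const | apply: m_gen_off; apply/eqP].
  by apply: functional_extensionality => v; rewrite mul1r subr0.
- rewrite (_ : (fun v => _) = fun v => (fun w => f w - f idpt) v + (fun w => g w - g idpt) v).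
    exact: gen_ideal_add.
  by apply: functional_extensionality => v; ring.
- rewrite (_ : (fun v => _) = fun v =>
      (fun w => g w * (f w - f idpt)) v + (fun w => (fun _ => f idpt) w * (g w - g idpt)) v).
    by apply: gen_ideal_add; apply: gen_ideal_mull => //; apply: poly_const.
  by apply: functional_extensionality => v; ring.
Qed.

Lemma m_ideal_vanishing_idpt (h : fn K) : is_poly h -> h idpt = 0 -> m_ideal h.
Proof.
move=> ph h0; rewrite (_ : h = fun v => h v - h idpt); first exact: m_ideal_sub_idpt.
by apply: functional_extensionality => v; rewrite h0 subr0.
Qed.

Lemma is_poly_local (f : fn K) : is_poly f -> exists N, forall u v : pt K,
  (forall i j, (i <= j)%N -> (j < N)%N -> u i j = v i j) -> f u = f v.
Proof.
have mono N N' (u v : pt K) : (N <= N')%N ->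
    (forall i j, (i <= j)%N -> (j < N')%N -> u i j = v i j) ->
    forall i j, (i <= j)%N -> (j < N)%N -> u i j = v i j.
  by move=> NN' uv i j ij jN; apply: uv => //; apply: leq_trans NN'.
elim=> [c|i j|f1 g1 _ [N1 H1] _ [N2 H2]|f1 g1 _ [N1 H1] _ [N2 H2]].
- by exists 0%N.
- by exists (maxn i j).+1 => u v uv; apply: uv; rewrite ?geq_min ?leq_max ?leqnn.
- exists (maxn N1 N2) => u v uv.
  by rewrite (H1 u v) ?(H2 u v) //; apply: mono uv; rewrite leq_max leqnn ?orbT.
- exists (maxn N1 N2) => u v uv.
  by rewrite (H1 u v) ?(H2 u v) //; apply: mono uv; rewrite leq_max leqnn ?orbT.
Qed.

Definition poly_curve (w : K -> pt K) :=
  forall i j, exists q : {poly K}, forall t, w t i j = q.[t].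

Lemma is_poly_curve (f : fn K) (w : K -> pt K) : is_poly f -> poly_curve w ->
  exists q : {poly K}, forall t, f (w t) = q.[t].
Proof.
move=> pf wq; elim: pf => [c|i j|f1 g1 _ [q1 H1] _ [q2 H2]|f1 g1 _ [q1 H1] _ [q2 H2]].
- by exists c%:P => t; rewrite hornerC.
- exact: wq.
- by exists (q1 + q2) => t; rewrite hornerD H1 H2.
- by exists (q1 * q2) => t; rewrite hornerM H1 H2.
Qed.

Lemma poly_nonroot_notin (q : {poly K}) (s : seq K) : q != 0 ->
  exists2 t, t \notin s & q.[t] != 0.
Proof.
move=> q0; have /closed_nonrootP [t] : q * \prod_(x <- s) ('X - x%:P) != 0.
  by rewrite mulf_neq0 // monic_neq0 // monic_prod_XsubC.
by rewrite rootM negb_or root_prod_XsubC => /andP [qt ts]; exists t.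
Qed.

End PolynomialFunctions.

Section SymmetricPoints.
Variable K : numClosedFieldType.

Definition symmetric (S : pt K) := forall i j, S i j = S j i.

Definition pad N (S : pt K) : pt K :=
  fun i j => if (i < N)%N && (j < N)%N then S i j else (i == j)%:R.

Lemma pad_symmetric N S : symmetric S -> symmetric (pad N S).
Proof. by move=> sS i j; rewrite /pad andbC sS eq_sym. Qed.

Lemma xvar_symmetric (u : pt K) i j : symmetric u -> xvar i j u = u i j.
Proof. by move=> su; rewrite /xvar; case: (leqP i j) => // _; rewrite su. Qed.

Lemma poly_curve_pad_line N (S E : pt K) :
  poly_curve (fun t => pad N (fun i j => S i j + E i j * t)).
Proof.
move=> i j; rewrite /pad; case: ((i < N)%N && (j < N)%N).
  by exists ((S i j)%:P + E i j *: 'X) => t; rewrite hornerD hornerC hornerZ hornerX.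
by exists ((i == j)%:R)%:P => t; rewrite hornerC.
Qed.

End SymmetricPoints.

Section PivotMatrices.
Variable K : numClosedFieldType.

Lemma sum_two_deltas B i k x y (F : nat -> K) : (i < B)%N -> (k < B)%N ->
  \sum_(m < B) (((m : nat) == i)%:R * x + ((m : nat) == k)%:R * y) * F m
  = x * F i + y * F k.
Proof.
have delta l (G : nat -> K) : (l < B)%N -> \sum_(m < B) ((m : nat) == l)%:R * G m = G l.
  move=> lB; rewrite (bigD1 (Ordinal lB)) //= eqxx mul1r big1 ?addr0 // => m.
  by rewrite -val_eqE /= => /negbTE ->; rewrite mul0r.
move=> iB kB; rewrite -(delta i (fun m => x * F m)) // -(delta k (fun m => y * F m)) //.
by rewrite -big_split; apply: eq_bigr => m _ /=; ring.
Qed.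

Definition pivot_mx n k (r c : nat -> K) : 'M[K]_n :=
  \matrix_(a < n, b < n) (((a : nat) == b)%:R * r b + ((a : nat) == k)%:R * c b).

Lemma ext_pivot_mx n k r c : (k < n)%N -> (forall b, (n <= b)%N -> r b = 1 /\ c b = 0) ->
  forall a b, ext (pivot_mx n k r c) a b = (a == b)%:R * r b + (a == k)%:R * c b.
Proof.
move=> kn rcn.
have out a b : (n <= a)%N || (n <= b)%N ->
    (a == b)%:R = (a == b)%:R * r b + (a == k)%:R * c b :> K.
  case/orP => [na|nb]; last by have [-> ->] := rcn _ nb; ring.
  have -> : (a == k) = false by apply/eqP; lia.
  have [<-|_] := eqVneq a b; last by rewrite !mul0r addr0.
  by have [-> ->] := rcn _ na; ring.
move=> a b; rewrite /ext; case: (@insubP _ _ 'I_n a) => [a' _ <-|na];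
  case: (@insubP _ _ 'I_n b) => [b' _ <-|nb] /=; rewrite ?mxE //;
  by apply: out; lia.
Qed.

Lemma act_pt_pivot_mx n k r c (u : pt K) i j :
  (k < n)%N -> (forall b, (n <= b)%N -> r b = 1 /\ c b = 0) ->
  act_pt (pivot_mx n k r c) u i j = r i * r j * xvar i j u + r i * c j * xvar i k u
                                   + c i * r j * xvar k j u + c i * c j * xvar k k u.
Proof.
move=> kn rcn; rewrite /act_pt.
have iB : (i < n + i + j + 1)%N by lia.
have jB : (j < n + i + j + 1)%N by lia.
have kB : (k < n + i + j + 1)%N by lia.
under eq_bigr => a _.
  under eq_bigr => b _ do rewrite -mulrA mulrCA (ext_pivot_mx kn rcn b j).
  rewrite (@sum_two_deltas _ _ _ _ _ (fun b => ext (pivot_mx n k r c) a i * xvar a b u)) //.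
  rewrite !(mulrCA _ (ext _ a i)) -mulrDr ext_pivot_mx //.
  over.
by rewrite (@sum_two_deltas _ _ _ _ _ (fun a => r j * xvar a j u + c j * xvar a k u)) //; ring.
Qed.

Lemma pivot_mx_unit n k r c : (k < n)%N -> (forall b, (b < n)%N -> r b != 0) -> c k = 0 ->
  pivot_mx n k r c \in unitmx.
Proof.
move=> kn r0 ck.
pose c' b := - c b / (r k * r b).
suff /mulmx1_unit [] : pivot_mx n k r c *m pivot_mx n k (fun b => (r b)^-1) c' = 1%:M by [].
apply/matrixP => a b; rewrite !mxE.
under eq_bigr => m _ do rewrite !mxE mulrC.
rewrite (@sum_two_deltas _ _ _ _ _
  (fun m => ((a : nat) == m)%:R * r m + ((a : nat) == k)%:R * c m)) //.
rewrite ck mulr0 addr0 /c'; field.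
by rewrite !r0.
Qed.
End PivotMatrices.

Section PivotStep.
Variable K : numClosedFieldType.

Definition id_rows k (S : pt K) := forall i j, (i < k)%N -> S i j = (i == j)%:R.

Variables (N k : nat) (S : pt K).
Hypotheses (kN : (k < N)%N) (sS : symmetric S) (idS : id_rows k S) (Skk : S k k != 0).

(* Completing the square in x_k: [pad N S = M^T (pad N W) M], where M is the
   identity except for row k, which is (0, ..., 0, rho, c_(k+1), ..., c_(N-1)). *)
Let rho := sqrtC (S k k).
Let r b := if b == k then rho else 1.
Let c b := if (k < b < N)%N then S k b / rho else 0.
Let W i j := if (i == k) || (j == k) then (i == j)%:R else S i j - c i * c j.

Let rho_neq0 : rho != 0. Proof. by rewrite sqrtC_eq0. Qed.

Let c_out b : ~~ (k < b < N)%N -> c b = 0. Proof. by rewrite /c => /negbTE ->. Qed.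

Let c_k : c k = 0. Proof. by rewrite c_out // ltnn. Qed.

Let pad_S_row j : j != k -> pad N S k j = rho * c j.
Proof.
move=> jk; rewrite /pad kN /c; case: (ltnP k j) => [kj|jk'] /=.
  by case: (j < N)%N => /=; [rewrite mulrC divfK | rewrite mulr0 eq_sym (negbTE jk)].
rewrite mulr0; case: (j < N)%N; last by rewrite eq_sym (negbTE jk).
by rewrite sS idS ?(negbTE jk) // ltn_neqAle jk jk'.
Qed.

Let W_symmetric : symmetric W.
Proof. by move=> i j; rewrite /W [(j == k) || _]orbC [j == i]eq_sym sS (mulrC (c j)). Qed.

Let W_id_rows : id_rows k.+1 W.
Proof.
move=> i j; rewrite ltnS leq_eqVlt => /orP [/eqP ->|ik]; first by rewrite /W eqxx.
have /negbTE ik' : i != k by rewrite ltn_eqF.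
rewrite /W ik' /=; case: eqP => [->|_]; first by rewrite ik'.
by rewrite idS // c_out ?mul0r ?subr0 //; apply/negP => /andP [/ltn_trans/(_ ik)]; rewrite ltnn.
Qed.

Let pad_W_col a : pad N W a k = (a == k)%:R.
Proof. by rewrite /pad /W kN eqxx orbT andbT; case: ifP. Qed.

Let pad_S_pivot : pad N S = act_pt (pivot_mx N k r c) (pad N W).
Proof.
have rcN b : (N <= b)%N -> r b = 1 /\ c b = 0.
  by move=> Nb; rewrite /r c_out; [split => //; case: eqP => // bk; lia | lia].
have sW := pad_symmetric N W_symmetric.
apply: functional_extensionality => i; apply: functional_extensionality => j.
rewrite act_pt_pivot_mx // !(xvar_symmetric _ _ sW) (sW k j) !pad_W_col eqxx.
have [->|ik] := eqVneq i k; have [->|jk] := eqVneq j k.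
- by rewrite /r /pad /W eqxx c_k kN /= -[S k k]sqrtCK -/rho; ring.
- rewrite (sW k j) pad_W_col c_k (negbTE jk) pad_S_row // /r eqxx (negbTE jk) /=.
  by ring.
- rewrite pad_W_col (negbTE ik) c_k (pad_symmetric _ sS) pad_S_row // /r eqxx (negbTE ik) /=.
  by ring.
- rewrite /r /pad /W (negbTE ik) (negbTE jk) /=.
  case: ifP => [_|/nandP iNjN]; first by ring.
  have -> : c i * c j = 0.
    case: iNjN => h; [rewrite (@c_out i) ?mul0r | rewrite (@c_out j) ?mulr0];
      by rewrite // negb_and h orbT.
  ring.
Qed.

Lemma pad_pivot : exists2 M : 'M[K]_N, M \in unitmx &
  exists2 W, symmetric W /\ id_rows k.+1 W & pad N S = act_pt M (pad N W).
Proof.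
exists (pivot_mx N k r c).
  apply: pivot_mx_unit => // b _.
  by rewrite /r; case: (b == k); [exact: rho_neq0 | exact: oner_neq0].
by exists W.
Qed.

End PivotStep.

Section GLClosure.
Variable K : numClosedFieldType.
Variable P : pt K -> Prop.
Hypothesis P_idpt : P (idpt K).
Hypothesis P_act : forall n (M : 'M[K]_n) u, M \in unitmx -> P u -> P (act_pt M u).
Hypothesis P_curve :
  forall (w : K -> pt K) (s : seq K),
    poly_curve w -> (forall t, t \notin s -> P (w t)) -> P (w 0).

Lemma P_pad_line N (S E : pt K) (s : seq K) :
  (forall t, t \notin s -> P (pad N (fun i j => S i j + E i j * t))) -> P (pad N S).
Proof.
move=> PS; have := P_curve (poly_curve_pad_line N S E) PS.
by congr (P (pad N _)); do 2 apply: functional_extensionality => ?; rewrite mulr0 addr0.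
Qed.

Lemma P_pad_id_rows N k S : (N <= k)%N -> id_rows k S -> P (pad N S).
Proof.
move=> Nk idS; congr P: P_idpt.
apply: functional_extensionality => i; apply: functional_extensionality => j.
by rewrite /pad /idpt; case: ifP => // /andP [iN _]; rewrite idS //; apply: leq_trans Nk.
Qed.

Lemma P_pad N S : symmetric S -> P (pad N S).
Proof.
suff PS m k : (N - k <= m)%N -> forall S, symmetric S -> id_rows k S -> P (pad N S).
  by move=> sS; apply: (PS N 0%N); rewrite ?subn0.
elim: m k => [|m IHm] k Nkm T sT idT.
  by apply: (P_pad_id_rows (k := k)) => //; lia.
have [Nk|kN] := leqP N k; first exact: (P_pad_id_rows Nk).
pose E i j : K := ((i == k) && (j == k))%:R.
apply: (P_pad_line (E := E) (s := [:: - T k k])) => t; rewrite inE => tT.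
have [|||M Mu [W [sW idW] ->]] := pad_pivot (S := fun i j => T i j + E i j * t) kN.
- by move=> i j; rewrite sT /E andbC.
- by move=> i j ik; rewrite /E (ltn_eqF ik) mul0r addr0 idT.
- by rewrite /E eqxx mul1r addrC addr_eq0.
by apply: P_act Mu _; apply: (IHm k.+1) => //; lia.
Qed.

End GLClosure.

Section NonzeroInvariantIdeal.
Variables (K : numClosedFieldType) (I : fn K -> Prop).
Hypotheses (idI : is_ideal I) (stI : GL_stable I).

Definition vanishes_at (v : pt K) := forall f, I f -> f v = 0.

Let ideal_poly f : I f -> is_poly f. Proof. by case: idI => + _ _ _; apply. Qed.

Lemma vanishes_at_act n (M : 'M[K]_n) u :
  M \in unitmx -> vanishes_at u -> vanishes_at (act_pt M u).
Proof. by move=> Mu uI f If; apply: (uI (act M f)); apply: stI. Qed.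

Lemma vanishes_at_curve (w : K -> pt K) (s : seq K) : poly_curve w ->
  (forall t, t \notin s -> vanishes_at (w t)) -> vanishes_at (w 0).
Proof.
move=> wq wI f If; have [q fq] := is_poly_curve (ideal_poly If) wq.
rewrite fq; apply/eqP; apply: contraT => q0.
have /(poly_nonroot_notin s) [t ts] : q != 0 by apply: contraNneq q0 => ->; rewrite horner0.
by rewrite -fq wI ?eqxx.
Qed.

Lemma vanishes_at_pad N S : vanishes_at (idpt K) -> symmetric S -> vanishes_at (pad N S).
Proof.
move=> van0 sS; apply: (@P_pad K (fun v => vanishes_at (idpt K) -> vanishes_at v)) => //.
- by move=> n M u Mu uI /uI; apply: vanishes_at_act.
- by move=> w s wq wI idv; apply: (vanishes_at_curve (s := s) wq) => t /wI; apply.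
Qed.

Lemma nonzero_GL_stable_ideal_idpt :
  (exists f, I f /\ f <> (fun _ => 0)) -> exists2 g, I g & g (idpt K) != 0.
Proof.
move=> [f [If f0]]; apply: NNPP => no_g; apply: f0.
have van0 : vanishes_at (idpt K).
  by move=> g Ig; apply/eqP; apply: contraT => g0; case: no_g; exists g.
have [N fN] := is_poly_local (ideal_poly If).
apply: functional_extensionality => v; pose S i j := xvar i j v.
have sS : symmetric S by move=> i j; rewrite /S /xvar minnC maxnC.
rewrite (fN v (pad N S)); first exact: (vanishes_at_pad N van0 sS) f If.
move=> i j ij jN.
by rewrite /pad /S /xvar (leq_ltn_trans ij jN) jN (minn_idPl ij) (maxn_idPr ij).
Qed.

End NonzeroInvariantIdeal.

Theorem mainTheorem14 (K : numClosedFieldType) (I : fn K -> Prop) :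
  is_ideal I -> GL_stable I -> (exists f, I f /\ f <> (fun _ => 0)) ->
  forall a : fn K, is_poly a ->
    exists f h : fn K, [/\ I f, m_ideal h & a = (fun v => f v + h v)].
Proof.
move=> idI stI nzI a pa.
have [g Ig g0] := nonzero_GL_stable_ideal_idpt idI stI nzI.
have [Ipoly _ _ Imul] := idI.
pose f v := a (idpt K) / g (idpt K) * g v.
have If : I f by apply: Imul => //; apply: poly_const.
exists f, (fun v => a v - f v); split => //.
  apply: m_ideal_vanishing_idpt; first by apply: is_poly_sub => //; apply: Ipoly.
  by rewrite /f divfK // subrr.
by apply: functional_extensionality => v; rewrite addrC subrK.
Qed.
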